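(* Let $f:[0,1]\to\mathbb{R}$ with $f(0),f(1)\in\mathbb{Z}$ and let $n\in\mathbb{N}_+$. If $n\ge 3$, let also $\tilde\varphi_n:[0,1]\to\mathbb{R}$ satisfy \[ \tilde\varphi_n\left(\frac{k+1}{n}\right)-\tilde\varphi_n\left(\frac{k}{n}\right)\ge \frac12\left(\binom{n}{k}^{-1}+\binom{n}{k+1}^{-1}\right),\quad k=1,\dots,n-2. \] (a) If $f$ is monotone increasing on $[0,1/n]$ and on $[1-1/n,1]$, and (when $n\ge 3$) $f(x)-\tilde\varphi_n(x)$ is monotone increasing on $[1/n,1-1/n]$, then $\widehat{B}_n(f)$ is monotone increasing on $[0,1]$. (b) If $f$ is monotone decreasing on $[0,1/n]$ and on $[1-1/n,1]$, and (when $n\ge3$) $f(x)+\tilde\varphi_n(x)$ is monotone decreasing on $[1/n,1-1/n]$, then $\widehat{B}_n(f)$ is monotone decreasing on $[0,1]$.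
   Context: For $n\in\mathbb{N}_+$ and $f:[0,1]\to\mathbb{R}$, $\widehat{B}_n(f)(x):=\sum_{k=0}^n \left\langle f\left(\frac{k}{n}\right)\binom{n}{k}\right\rangle x^k(1-x)^{n-k}$, where $\langle\alpha\rangle$ is the integer nearest to $\alpha$ (when $\alpha$ is a half-integer, $\langle\alpha\rangle$ may be either neighbouring integer, chosen arbitrarily; the result holds for any such choice). Monotone increasing/decreasing are meant in the non-strict sense. *)

From HB Require Import structures.
From mathcomp Require Import all_boot all_order all_algebra.
Set Implicit Arguments. Unset Strict Implicit. Unset Printing Implicit Defensive.
Import Order.TTheory GRing.Theory Num.Theory.
Local Open Scope ring_scope.

(* c k is an integer nearest to f(k/n) * C(n,k), ties broken arbitrarily:
   exactly the integers at distance <= 1/2. *)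
Definition nearest_int_coeffs (R : realFieldType) (f : R -> R) (n : nat)
  (c : nat -> int) : Prop :=
  forall k, (k <= n)%N ->
    `|(c k)%:~R - f (k%:R / n%:R) * ('C(n, k))%:R| <= (2:R)^-1.

Definition Bhat (R : realFieldType) (n : nat) (c : nat -> int) (x : R) : R :=
  \sum_(k < n.+1) (c k)%:~R * x ^+ k * (1 - x) ^+ (n - k).

Definition incr_on (R : realFieldType) (g : R -> R) (a b : R) : Prop :=
  forall x y, a <= x -> x <= y -> y <= b -> g x <= g y.
Definition decr_on (R : realFieldType) (g : R -> R) (a b : R) : Prop :=
  forall x y, a <= x -> x <= y -> y <= b -> g y <= g x.

(* With b_k := c_k / C(n,k), \hat B_n(f) is the Bernstein polynomial of the
   sequence b, and the Bernstein polynomial of a nondecreasing sequence is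
   nondecreasing on [0,1]; so it suffices that b_k <= b_(k+1).  Each b_k lies
   within 1/(2 C(n,k)) of f(k/n).  In the interior the prescribed increments
   of phi exceed the sum of two consecutive rounding errors.  At the ends,
   f(0) and f(1) are integers and c_0, c_1 (resp. c_(n-1), c_n) are rounded
   at scales C(n,.) = 1 and n, so rounding cannot reverse the order.  The
   decreasing case is the increasing one applied to -f and -c. *)

From mathcomp Require Import all_boot all_order all_algebra.
From mathcomp Require Import ring lra zify.
Import Order.TTheory GRing.Theory Num.Theory.
Local Open Scope ring_scope.

Section Bernstein.
Variable R : numDomainType.

Definition bernstein n (b : nat -> R) (x : R) : R :=
  \sum_(k < n.+1) b k * 'C(n, k)%:R * x ^+ k * (1 - x) ^+ (n - k).

Lemma bernsteinS n b (x : R) :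
  bernstein n.+1 b x = (1 - x) * bernstein n b x + x * bernstein n (b \o succn) x.
Proof.
rewrite /bernstein big_ord_recl [in X in (1 - x) * X]big_ord_recl.
rewrite mulrDr !mulr_sumr -addrA; congr (_ + _).
  by rewrite !bin0 !subn0 exprS; ring.
under eq_bigr => i _ do rewrite (lift0 i) subSS binS natrD mulrDr !mulrDl.
rewrite big_split /=; congr (_ + _).
  rewrite big_ord_recr /= bin_small // mulr0 !mul0r addr0.
  apply: eq_bigr => i _; rewrite /bump leq0n add1n -(subnSK (ltn_ord i)).
  by rewrite [(1 - x) ^+ _]exprS; ring.
by apply: eq_bigr => i _; rewrite exprS; ring.
Qed.

Lemma ler_bernstein n b b' (x : R) :
  (forall k, (k <= n)%N -> b k <= b' k) -> 0 <= x -> x <= 1 ->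
  bernstein n b x <= bernstein n b' x.
Proof.
move=> le_bb' x_ge0 x_le1; apply: ler_sum => k _.
have xk_ge0 : 0 <= x ^+ k by rewrite exprn_ge0.
have x'k_ge0 : 0 <= (1 - x) ^+ (n - k) by rewrite exprn_ge0 // subr_ge0.
by do 3 apply: ler_wpM2r => //; apply: le_bb'; rewrite -ltnS.
Qed.

(* By bernsteinS the increment is a nonnegative combination of increments in
   degree n and of the gap between the polynomials of [b \o succn] and [b]. *)
Lemma bernstein_homo n b (x y : R) :
  (forall k, (k < n)%N -> b k <= b k.+1) -> 0 <= x -> x <= y -> y <= 1 ->
  bernstein n b x <= bernstein n b y.
Proof.
elim: n b => [|n IHn] b b_incr x_ge0 le_xy y_le1.
  by rewrite /bernstein !big_ord1.
have y_ge0 : 0 <= y by apply: le_trans le_xy.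
have IHb := IHn b (fun k lt_kn => b_incr k (ltnW lt_kn)) x_ge0 le_xy y_le1.
have IHbS := IHn (b \o succn) (fun k lt_kn => b_incr k.+1 lt_kn) x_ge0 le_xy y_le1.
have le_bbS : bernstein n b x <= bernstein n (b \o succn) x.
  by apply: ler_bernstein x_ge0 (le_trans le_xy y_le1) => k; apply: b_incr.
rewrite !bernsteinS -subr_ge0.
set Bx := bernstein n b x in IHb le_bbS *; set By := bernstein n b y in IHb *.
set BSx := bernstein n _ x in IHbS le_bbS *; set BSy := bernstein n _ y in IHbS *.
have -> : (1 - y) * By + y * BSy - ((1 - x) * Bx + x * BSx) =
  (1 - y) * (By - Bx) + y * (BSy - BSx) + (y - x) * (BSx - Bx) by ring.
by rewrite !addr_ge0 // mulr_ge0 // subr_ge0.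
Qed.

End Bernstein.

Arguments bernstein {R} n b x.

Lemma int_le_of_le_addhalf {R : realFieldType} (z w : int) :
  z%:~R <= w%:~R + 2^-1 :> R -> (z <= w)%R.
Proof.
move=> le_zw; rewrite leNgt; apply/negP => lt_wz.
have : (w + 1)%:~R <= z%:~R :> R by rewrite ler_int lezD1.
rewrite intrD /=; lra.
Qed.

Lemma nearest_int_ge {R : realFieldType} (c z : int) (N : nat) (v : R) :
  `|c%:~R - v * N%:R| <= 2^-1 -> z%:~R <= v -> (z * N%:Z <= c)%R.
Proof.
rewrite ler_norml => /andP[c_ge _] le_zv; apply: int_le_of_le_addhalf.
have := ler_wpM2r (ler0n R N) le_zv; rewrite intrM -pmulrn; lra.
Qed.

Lemma nearest_int_le {R : realFieldType} (c z : int) (N : nat) (v : R) :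
  `|c%:~R - v * N%:R| <= 2^-1 -> v <= z%:~R -> (c <= z * N%:Z)%R.
Proof.
rewrite ler_norml => /andP[_ c_le] le_vz; apply: int_le_of_le_addhalf.
have := ler_wpM2r (ler0n R N) le_vz; rewrite intrM -pmulrn; lra.
Qed.

Definition Bhat_coeff {R : realFieldType} n (c : nat -> int) k : R :=
  (c k)%:~R / 'C(n, k)%:R.

Lemma Bhat_bernstein {R : realFieldType} n c (x : R) :
  Bhat n c x = bernstein n (Bhat_coeff n c) x.
Proof.
apply: eq_bigr => k _; rewrite /Bhat_coeff divfK //.
by rewrite pnatr_eq0 -lt0n bin_gt0 -ltnS.
Qed.

Lemma Bhat_opp {R : realFieldType} n c (x : R) :
  Bhat n (fun k => - c k) x = - Bhat n c x.
Proof. by rewrite /Bhat -sumrN; apply: eq_bigr => k _; rewrite mulrNz !mulNr. Qed.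

Lemma nearest_int_coeffsN {R : realFieldType} (f : R -> R) n c :
  nearest_int_coeffs f n c -> nearest_int_coeffs (fun x => - f x) n (fun k => - c k).
Proof. by move=> near k le_kn; rewrite mulrNz mulNr -opprD normrN near. Qed.

Lemma incr_onN {R : realFieldType} (g : R -> R) a b :
  incr_on (fun x => - g x) a b <-> decr_on g a b.
Proof. by split=> mono x y *; [rewrite -lerN2 | rewrite lerN2]; apply: mono. Qed.

Section Increasing.
Variables (R : realFieldType) (f phi : R -> R) (n : nat) (c : nat -> int).
Variables z0 z1 : int.
Hypotheses (n_gt0 : (0 < n)%N) (f0 : f 0 = z0%:~R) (f1 : f 1 = z1%:~R).
Hypothesis near : nearest_int_coeffs f n c.
Hypothesis phi_gap : (3 <= n)%N -> forall k, (1 <= k)%N -> (k <= n - 2)%N ->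
  phi (k.+1%:R / n%:R) - phi (k%:R / n%:R) >=
    2^-1 * ('C(n, k)%:R^-1 + 'C(n, k.+1)%:R^-1).
Hypothesis f_incr_lo : incr_on f 0 n%:R^-1.
Hypothesis f_incr_hi : incr_on f (1 - n%:R^-1) 1.
Hypothesis f_phi_incr :
  (3 <= n)%N -> incr_on (fun x => f x - phi x) n%:R^-1 (1 - n%:R^-1).

Let n_pos : 0 < n%:R :> R. Proof. by rewrite ltr0n. Qed.

Let grid_le i j : (i <= j)%N -> i%:R / n%:R <= j%:R / n%:R :> R.
Proof. by move=> le_ij; rewrite ler_wpM2r ?invr_ge0 ?ler_nat ?ltW. Qed.

Let grid_pred : 1 - n%:R^-1 = (n - 1)%N%:R / n%:R :> R.
Proof. by rewrite natrB // mulrBl divff ?lt0r_neq0 // mul1r. Qed.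

Lemma Bhat_coeff_near k : (k <= n)%N ->
  `|Bhat_coeff n c k - f (k%:R / n%:R)| <= 2^-1 / 'C(n, k)%:R.
Proof.
move=> le_kn; have C_gt0 : 0 < 'C(n, k)%:R :> R by rewrite ltr0n bin_gt0.
rewrite -(mulfK (lt0r_neq0 C_gt0) (f _)) -mulrBl normrM.
by rewrite normfV normr_nat ler_pM2r ?invr_gt0 //; apply: near.
Qed.

Lemma Bhat_coeff_incr_first : Bhat_coeff n c 0 <= Bhat_coeff n c 1 :> R.
Proof.
have c0_le : (c 0%N <= z0)%R.
  rewrite -[z0]mulr1; apply: (nearest_int_le _ _ 1 (f 0)); last by rewrite f0.
  by have := near _ (leq0n n); rewrite mul0r bin0.
have c1_ge : (z0 * n%:Z <= c 1%N)%R.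
  apply: (nearest_int_ge _ _ _ (f (1%:R / n%:R))).
    by have := near _ n_gt0; rewrite bin1.
  by rewrite -f0 mul1r; apply: f_incr_lo; rewrite ?lexx ?invr_ge0 ?ler0n.
rewrite /Bhat_coeff bin0 bin1 divr1 ler_pdivlMr //.
have : (c 0%N * n%:Z <= c 1%N)%R by apply: le_trans c1_ge; rewrite ler_wpM2r.
by rewrite -(ler_int R) intrM -pmulrn.
Qed.

Lemma Bhat_coeff_incr_last : Bhat_coeff n c n.-1 <= Bhat_coeff n c n :> R.
Proof.
have C_pred : 'C(n, n.-1) = n by rewrite -subn1 bin_sub // bin1.
have cpred_le : (c n.-1 <= z1 * n%:Z)%R.
  apply: (nearest_int_le _ _ _ (f (n.-1%:R / n%:R))).
    by have := near _ (leq_pred n); rewrite C_pred.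
  have := f_incr_hi (n.-1%:R / n%:R) 1.
  rewrite f1 -subn1 -grid_pred lexx; apply=> //.
  by rewrite lerBlDr lerDl invr_ge0 ler0n.
have cn_ge : (z1 <= c n)%R.
  rewrite -[z1]mulr1; apply: (nearest_int_ge _ _ 1 (f 1)); last by rewrite f1.
  by have := near _ (leqnn n); rewrite binn divff ?lt0r_neq0.
rewrite /Bhat_coeff C_pred binn divr1 ler_pdivrMr //.
have : (c n.-1 <= c n * n%:Z)%R by apply: le_trans cpred_le _; rewrite ler_wpM2r.
by rewrite -(ler_int R) intrM -pmulrn.
Qed.

Lemma Bhat_coeff_incr_mid k : (0 < k)%N -> (k.+2 <= n)%N ->
  Bhat_coeff n c k <= Bhat_coeff n c k.+1 :> R.
Proof.
move=> k_gt0 lt_k1n; have n_ge3 : (3 <= n)%N by lia.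
have := Bhat_coeff_near k (ltnW (ltnW lt_k1n)).
rewrite ler_norml => /andP[_ near_k].
have := Bhat_coeff_near k.+1 (ltnW lt_k1n).
rewrite ler_norml => /andP[near_k1 _].
have le_k_n2 : (k <= n - 2)%N by lia.
have gap := phi_gap n_ge3 k k_gt0 le_k_n2.
have f_phi_k : f (k%:R / n%:R) - phi (k%:R / n%:R)
               <= f (k.+1%:R / n%:R) - phi (k.+1%:R / n%:R).
  apply: f_phi_incr => //.
  - by have := grid_le _ _ k_gt0; rewrite mul1r.
  - exact: grid_le.
  - by rewrite grid_pred grid_le //; lia.
lra.
Qed.

Lemma Bhat_coeff_incr k :
  (k < n)%N -> Bhat_coeff n c k <= Bhat_coeff n c k.+1 :> R.
Proof.
case: k => [_|k lt_k1n]; first exact: Bhat_coeff_incr_first.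
have [Ek2n|ne_k2n] := eqVneq k.+2 n.
  by move: Bhat_coeff_incr_last; rewrite -Ek2n.
by apply: Bhat_coeff_incr_mid => //; rewrite ltn_neqAle ne_k2n.
Qed.

Lemma Bhat_incr_on : incr_on (Bhat n c : R -> R) 0 1.
Proof.
move=> x y x_ge0 le_xy y_le1; rewrite !Bhat_bernstein.
by apply: bernstein_homo => // k; apply: Bhat_coeff_incr.
Qed.

End Increasing.

Arguments Bhat_incr_on {R f phi n c z0 z1}.

Theorem proposition2p9 (R : realFieldType) (f phi : R -> R) (n : nat)
  (c : nat -> int) :
  (0 < n)%N ->
  (exists z : int, f (0:R) = z%:~R) -> (exists z : int, f (1:R) = z%:~R) ->
  nearest_int_coeffs f n c ->
  ((3 <= n)%N -> forall k, (1 <= k)%N -> (k <= n - 2)%N ->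
     phi (k.+1%:R / n%:R) - phi (k%:R / n%:R) >=
       (2:R)^-1 * (('C(n, k))%:R^-1 + ('C(n, k.+1))%:R^-1)) ->
  ((incr_on f (0:R) n%:R^-1 -> incr_on f (1 - n%:R^-1) 1 ->
    ((3 <= n)%N -> incr_on (fun x => f x - phi x) n%:R^-1 (1 - n%:R^-1)) ->
    incr_on (Bhat n c) (0:R) 1)
  /\
   (decr_on f (0:R) n%:R^-1 -> decr_on f (1 - n%:R^-1) 1 ->
    ((3 <= n)%N -> decr_on (fun x => f x + phi x) n%:R^-1 (1 - n%:R^-1)) ->
    decr_on (Bhat n c) (0:R) 1)).
Proof.
move=> n_gt0 [z0 f0] [z1 f1] near phi_gap.
split; first exact: Bhat_incr_on n_gt0 f0 f1 near phi_gap.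
move=> f_decr_lo f_decr_hi f_phi_decr; apply/incr_onN => x y x_ge0 le_xy y_le1.
rewrite -!Bhat_opp.
apply: (@Bhat_incr_on R (fun x => - f x) phi n (fun k => - c k) (- z0) (- z1)) => //.
- by rewrite f0 mulrNz.
- by rewrite f1 mulrNz.
- exact: nearest_int_coeffsN.
- exact/incr_onN.
- exact/incr_onN.
- move=> n_ge3 u v u_ge le_uv v_le.
  by have := f_phi_decr n_ge3 u v u_ge le_uv v_le; lra.
Qed.
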